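(* Let $\mathcal{S}=\langle\mathcal{L},\vdash\rangle$ be a logical structure and $\varrho,\sigma\subseteq\mathcal{P}(\mathcal{L})\times\mathcal{L}$. If $\sigma$ is downward directed, then $(\vdash^\varrho)^\sigma\,\subseteq\,(\vdash^\sigma)^\varrho$. Hence, if both $\varrho$ and $\sigma$ are downward directed, then $(\vdash^\varrho)^\sigma\,=\,(\vdash^\sigma)^\varrho$.
   Context: A logical structure is a pair $\langle\mathcal{L},\vdash\rangle$ with $\mathcal{L}$ a set and $\vdash\subseteq\mathcal{P}(\mathcal{L})\times\mathcal{L}$ arbitrary. For $\varrho\subseteq\mathcal{P}(\mathcal{L})\times\mathcal{L}$: $\Gamma\vdash^\varrho\alpha$ iff there is $\Delta\subseteq\Gamma$ with $(\Delta,\alpha)\in\varrho$ and $\Delta\vdash\alpha$. $(\vdash^\varrho)^\sigma$ is the $\sigma$-companion of $\langle\mathcal{L},\vdash^\varrho\rangle$. A relation $\varrho\subseteq\mathcal{P}(\mathcal{L})\times\mathcal{L}$ is downward directed if $(\Delta,\alpha)\in\varrho$ implies $(\Delta',\alpha)\in\varrho$ for all $\Delta'\subseteq\Delta$. *)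

(* A logical structure <L, |-> : a carrier type L and an arbitrary relation
   |- ⊆ P(L) × L. *)
Definition rel_PL (L : Type) : Type := (L -> Prop) -> L -> Prop.

Definition subset {L : Type} (A B : L -> Prop) : Prop := forall x, A x -> B x.

Definition companion {L : Type} (vdash rho : rel_PL L) : rel_PL L :=
  fun Gamma alpha => exists Delta, subset Delta Gamma /\ rho Delta alpha /\ vdash Delta alpha.

Definition downward_directed {L : Type} (rho : rel_PL L) : Prop :=
  forall Delta alpha Delta', rho Delta alpha -> subset Delta' Delta -> rho Delta' alpha.

Definition rel_incl {L : Type} (R S : rel_PL L) : Prop :=
  forall Gamma alpha, R Gamma alpha -> S Gamma alpha.


(* If Δ ⊆ Γ, (Δ, α) ∈ σ and Δ ⊢^ρ α via some E ⊆ Δ with (E, α) ∈ ρ and E ⊢ α,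
   then downward directedness of σ gives (E, α) ∈ σ, so E ⊢^σ α with E as its
   own witness, and E ⊆ Γ then witnesses Γ (⊢^σ)^ρ α. *)

Lemma subset_trans {L : Type} (A B C : L -> Prop) :
  subset A B -> subset B C -> subset A C.
Proof. intros HAB HBC x Hx. exact (HBC x (HAB x Hx)). Qed.

Lemma subset_refl {L : Type} (A : L -> Prop) : subset A A.
Proof. intros x Hx. exact Hx. Qed.

Lemma companion_self {L : Type} (vdash rho : rel_PL L) Delta alpha :
  rho Delta alpha -> vdash Delta alpha -> companion vdash rho Delta alpha.
Proof.
  intros Hrho Hvdash. exists Delta. split; [apply subset_refl | split; assumption].
Qed.

Lemma companion_comm_incl {L : Type} (vdash rho sigma : rel_PL L) :
  downward_directed sigma ->
  rel_incl (companion (companion vdash rho) sigma) (companion (companion vdash sigma) rho).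
Proof.
  intros Hsigma Gamma alpha [Delta [HDG [HsD [E [HED [HrE HvE]]]]]].
  exists E. split; [exact (subset_trans E Delta Gamma HED HDG) | split; [exact HrE |]].
  apply companion_self; [exact (Hsigma Delta alpha E HsD HED) | exact HvE].
Qed.

Theorem theorem3p12 (L : Type) (vdash rho sigma : rel_PL L) :
  (downward_directed sigma ->
     rel_incl (companion (companion vdash rho) sigma) (companion (companion vdash sigma) rho))
  /\
  (downward_directed rho -> downward_directed sigma ->
     forall Gamma alpha,
       companion (companion vdash rho) sigma Gamma alpha <->
       companion (companion vdash sigma) rho Gamma alpha).
Proof.
  split.
  - apply companion_comm_incl.
  - intros Hrho Hsigma Gamma alpha. split; apply companion_comm_incl; assumption.
Qed.
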